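(* Let $n\ge1$ and $\beta\ge2(n+2)$. For every $l=(l_j)_{j\ge1}\in\mathbb{Z}^\infty$ with finitely many nonzero entries and $1\le|l|\le2$, $$\ln(1+\langle l\rangle)\ge\frac18\,\|l\|_{2\beta}^{\frac1{2\beta}}\,\|l\|_{-2\beta}^{\frac1{2\beta}},$$ where $\|l\|_{\pm2\beta}=\sup_{j\ge1}|l_j|(1+\ln j)^{\pm2\beta}$.
   Context: $|l|=\sum_j|l_j|$ and $\langle l\rangle=\max\{1,|\sum_{j\ge1}jl_j|\}$. *)

From Stdlib Require Import Reals ZArith List.
Open Scope R_scope.

(* A finitely supported sequence l = (l_j)_{j>=1} in Z^infty is represented by
   a finite list [l_1; l_2; ...; l_N] (entries beyond the list are 0). *)

Fixpoint abs_norm (l : list Z) : Z :=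
  match l with nil => 0%Z | x :: r => (Z.abs x + abs_norm r)%Z end.

Fixpoint wsum_from (j : nat) (l : list Z) : Z :=
  match l with nil => 0%Z | x :: r => (Z.of_nat j * x + wsum_from (S j) r)%Z end.

Definition bracket (l : list Z) : R := Rmax 1 (Rabs (IZR (wsum_from 1 l))).

Fixpoint wnorm_from (s : R) (j : nat) (l : list Z) : R :=
  match l with
  | nil => 0
  | x :: r => Rmax (IZR (Z.abs x) * Rpower (1 + ln (INR j)) s) (wnorm_from s (S j) r)
  end.

Definition wnorm (s : R) (l : list Z) : R := wnorm_from s 1 l.

(** Since [1 <= |l| <= 2], the sequence [l] has one nonzero entry of size at
    most 2, or two entries equal to [+-1].  Both weighted norms are attained at
    nonzero entries [l_j] and [l_k], and their product of [1/(2 beta)]-th roots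
    is at most [|l_j| |l_k| (1 + ln j) / (1 + ln k)].  If [j = k] this is at
    most [4].  Otherwise [<l> >= |j - k|], because [j l_j + k l_k] with
    [l_j, l_k = +-1] is at least [|j - k|] in absolute value; and
    [j <= k (1 + |j - k|)] bounds the ratio of log-weights by
    [1 + ln (1 + <l>)].  In both cases [ln (1 + <l>) >= ln 2 > 1/2] absorbs the
    constant [8]. *)

From Stdlib Require Import Reals ZArith List Lia Lra Psatz.
Open Scope R_scope.

Lemma abs_norm_nonneg l : (0 <= abs_norm l)%Z.
Proof. induction l; simpl; lia. Qed.

Lemma abs_norm_ge_nth l p : (Z.abs (nth p l 0%Z) <= abs_norm l)%Z.
Proof.
  revert p; induction l as [|x l IHl]; intros [|p]; simpl; try lia.
  - pose proof (abs_norm_nonneg l); lia.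
  - specialize (IHl p); lia.
Qed.

Lemma abs_norm_ge_nth_pair l p q : p <> q ->
  (Z.abs (nth p l 0%Z) + Z.abs (nth q l 0%Z) <= abs_norm l)%Z.
Proof.
  revert p q; induction l as [|x l IHl]; intros [|p] [|q] Hpq; simpl; try lia.
  - pose proof (abs_norm_ge_nth l q); lia.
  - pose proof (abs_norm_ge_nth l p); lia.
  - specialize (IHl p q ltac:(lia)); lia.
Qed.

Lemma wsum_from_abs_norm0 l m : abs_norm l = 0%Z -> wsum_from m l = 0%Z.
Proof.
  revert m; induction l as [|x l IHl]; intros m Hl; simpl in *; auto.
  pose proof (abs_norm_nonneg l).
  rewrite IHl by lia. nia.
Qed.

Lemma wsum_from_single l m p : (abs_norm l <= Z.abs (nth p l 0%Z))%Z ->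
  wsum_from m l = (Z.of_nat (m + p) * nth p l 0%Z)%Z.
Proof.
  revert m p; induction l as [|x l IHl]; intros m [|p] Hl; simpl in *; try lia.
  - rewrite wsum_from_abs_norm0 by (pose proof (abs_norm_nonneg l); lia).
    rewrite Nat.add_0_r; lia.
  - pose proof (abs_norm_ge_nth l p).
    assert (x = 0%Z) by lia; subst x.
    rewrite (IHl (S m) p) by lia.
    rewrite <- plus_n_Sm; lia.
Qed.

Lemma wsum_from_pair l m p q : p <> q ->
  (abs_norm l <= Z.abs (nth p l 0%Z) + Z.abs (nth q l 0%Z))%Z ->
  wsum_from m l
  = (Z.of_nat (m + p) * nth p l 0%Z + Z.of_nat (m + q) * nth q l 0%Z)%Z.
Proof.
  revert m p q; induction l as [|x l IHl]; intros m [|p] [|q] Hpq Hl;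
    simpl in *; try lia.
  - rewrite (wsum_from_single l (S m) q) by lia.
    rewrite Nat.add_0_r, <- plus_n_Sm; lia.
  - rewrite (wsum_from_single l (S m) p) by lia.
    rewrite Nat.add_0_r, <- plus_n_Sm; lia.
  - pose proof (abs_norm_ge_nth_pair l p q ltac:(lia)).
    assert (x = 0%Z) by lia; subst x.
    rewrite (IHl (S m) p q) by lia.
    rewrite <- !plus_n_Sm; lia.
Qed.

Lemma Rpower_pos x y : 0 < Rpower x y.
Proof. apply exp_pos. Qed.

Lemma wnorm_from_nonneg s m l : 0 <= wnorm_from s m l.
Proof.
  revert m; induction l as [|x l IHl]; intros m; simpl; [lra|].
  eapply Rle_trans; [apply IHl | apply Rmax_r].
Qed.

Lemma wnorm_from_abs_norm0 s m l : abs_norm l = 0%Z -> wnorm_from s m l = 0.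
Proof.
  revert m; induction l as [|x l IHl]; intros m Hl; simpl in *; auto.
  pose proof (abs_norm_nonneg l).
  rewrite IHl by lia.
  replace (Z.abs x) with 0%Z by lia.
  rewrite Rmult_0_l; apply Rmax_left; lra.
Qed.

Lemma wnorm_from_attained s m l : (1 <= abs_norm l)%Z ->
  exists p, nth p l 0%Z <> 0%Z /\
    wnorm_from s m l = IZR (Z.abs (nth p l 0%Z)) * Rpower (1 + ln (INR (m + p))) s.
Proof.
  revert m; induction l as [|x l IHl]; intros m Hl; simpl in Hl; [lia|].
  simpl wnorm_from.
  set (head := IZR (Z.abs x) * Rpower (1 + ln (INR m)) s).
  assert (Hhead0 : x <> 0%Z -> exists p, nth p (x :: l) 0%Z <> 0%Z /\
            head = IZR (Z.abs (nth p (x :: l) 0%Z)) * Rpower (1 + ln (INR (m + p))) s).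
  { intros Hx; exists 0%nat; split; [exact Hx|]. now rewrite Nat.add_0_r. }
  destruct (Z_le_gt_dec 1 (abs_norm l)) as [Htail | Htail].
  - destruct (IHl (S m) Htail) as [p [Hp Heq]].
    destruct (Rle_dec head (wnorm_from s (S m) l)) as [Hle | Hgt].
    + rewrite Rmax_right by exact Hle.
      exists (S p); split; [exact Hp|]. rewrite Heq, <- plus_n_Sm; reflexivity.
    + rewrite Rmax_left by lra.
      apply Hhead0; intros ->.
      pose proof (wnorm_from_nonneg s (S m) l).
      apply Hgt; unfold head; simpl; lra.
  - pose proof (abs_norm_nonneg l).
    rewrite (wnorm_from_abs_norm0 s (S m) l) by lia.
    rewrite Rmax_left.
    + apply Hhead0; lia.
    + apply Rmult_le_pos; [apply IZR_le; lia | left; apply Rpower_pos].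
Qed.

Lemma ln_le_mono x y : 0 < x -> x <= y -> ln x <= ln y.
Proof.
  intros Hx [Hlt | ->]; [left; now apply ln_increasing | lra].
Qed.

Lemma ln_nat_nonneg j : (1 <= j)%nat -> 0 <= ln (INR j).
Proof.
  intros Hj. rewrite <- ln_1. apply ln_le_mono; [lra|].
  now apply (le_INR 1).
Qed.

(* The truncated [p - q] suffices: for [p <= q] this is monotonicity of [ln]. *)
Lemma ln_succ_le p q : ln (INR (S p)) <= ln (INR (S q)) + ln (1 + INR (p - q)).
Proof.
  assert (Hq : 0 < INR (S q)) by (apply lt_0_INR; lia).
  assert (Hd : 0 < 1 + INR (p - q)) by (pose proof (pos_INR (p - q)); lra).
  rewrite <- ln_mult by assumption.
  apply ln_le_mono; [apply lt_0_INR; lia|].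
  replace (1 + INR (p - q)) with (INR (S (p - q))) by (rewrite S_INR; lra).
  rewrite <- mult_INR. apply le_INR. nia.
Qed.

Lemma Rpower_inv_le a s : 1 <= a -> 1 <= s -> Rpower a (/ s) <= a.
Proof.
  intros Ha Hs. rewrite <- (Rpower_1 a) at 2 by lra.
  apply Rle_Rpower; [exact Ha|].
  rewrite <- Rinv_1. apply Rinv_le_contravar; lra.
Qed.

Lemma Rpower_root_of_weighted a w s : 0 < a -> 0 < w -> s <> 0 ->
  Rpower (a * Rpower w s) (/ s) = Rpower a (/ s) * w.
Proof.
  intros Ha Hw Hs.
  rewrite <- Rpower_mult_distr by (try apply Rpower_pos; assumption).
  rewrite Rpower_mult, Rinv_r, Rpower_1 by assumption. reflexivity.
Qed.

Lemma Rpower_root_of_weighted_opp a w s : 0 < a -> 0 < w -> s <> 0 ->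
  Rpower (a * Rpower w (- s)) (/ s) = Rpower a (/ s) / w.
Proof.
  intros Ha Hw Hs.
  rewrite <- Rpower_mult_distr by (try apply Rpower_pos; assumption).
  rewrite Rpower_mult.
  replace (- s * / s) with (- (1)) by (field; exact Hs).
  rewrite Rpower_Ropp, Rpower_1 by assumption. reflexivity.
Qed.

Lemma wnorm_dual_product_le s l : 1 <= s -> (1 <= abs_norm l)%Z ->
  exists p q, nth p l 0%Z <> 0%Z /\ nth q l 0%Z <> 0%Z /\
    Rpower (wnorm s l) (/ s) * Rpower (wnorm (- s) l) (/ s)
    <= IZR (Z.abs (nth p l 0%Z)) * IZR (Z.abs (nth q l 0%Z))
       * ((1 + ln (INR (S p))) / (1 + ln (INR (S q)))).
Proof.
  intros Hs Hl.
  destruct (wnorm_from_attained s 1 l Hl) as [p [Hp Hsp]].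
  destruct (wnorm_from_attained (- s) 1 l Hl) as [q [Hq Hsq]].
  exists p, q; split; [exact Hp|]; split; [exact Hq|].
  unfold wnorm; rewrite Hsp, Hsq.
  assert (Hap : 1 <= IZR (Z.abs (nth p l 0%Z))) by (apply IZR_le; lia).
  assert (Haq : 1 <= IZR (Z.abs (nth q l 0%Z))) by (apply IZR_le; lia).
  change (1 + p)%nat with (S p); change (1 + q)%nat with (S q).
  pose proof (ln_nat_nonneg (S p) ltac:(lia)).
  pose proof (ln_nat_nonneg (S q) ltac:(lia)).
  rewrite Rpower_root_of_weighted, Rpower_root_of_weighted_opp by lra.
  set (ratio := (1 + ln (INR (S p))) / (1 + ln (INR (S q)))).
  assert (0 <= ratio).
  { apply Rmult_le_pos; [lra | left; apply Rinv_0_lt_compat; lra]. }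
  replace (_ * _ * _) with
    (Rpower (IZR (Z.abs (nth p l 0%Z))) (/ s) * Rpower (IZR (Z.abs (nth q l 0%Z))) (/ s)
     * ratio) by (unfold ratio, Rdiv; ring).
  apply Rmult_le_compat_r; [assumption|].
  pose proof (Rpower_pos (IZR (Z.abs (nth p l 0%Z))) (/ s)).
  pose proof (Rpower_pos (IZR (Z.abs (nth q l 0%Z))) (/ s)).
  apply Rmult_le_compat; try apply Rpower_inv_le; lra.
Qed.

Lemma abs_gap_le_signed_sum (a b : nat) (x y : Z) :
  Z.abs x = 1%Z -> Z.abs y = 1%Z ->
  (Z.abs (Z.of_nat a - Z.of_nat b) <= Z.abs (Z.of_nat a * x + Z.of_nat b * y))%Z.
Proof.
  intros Hx Hy.
  assert (Hx1 : x = 1%Z \/ x = (-1)%Z) by lia.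
  assert (Hy1 : y = 1%Z \/ y = (-1)%Z) by lia.
  destruct Hx1 as [-> | ->], Hy1 as [-> | ->]; lia.
Qed.

Lemma bracket_ge_gap l p q : (abs_norm l <= 2)%Z -> p <> q ->
  nth p l 0%Z <> 0%Z -> nth q l 0%Z <> 0%Z -> INR (p - q) <= bracket l.
Proof.
  intros Hl Hpq Hp Hq.
  pose proof (abs_norm_ge_nth_pair l p q Hpq).
  unfold bracket; rewrite (wsum_from_pair l 1 p q Hpq) by lia.
  eapply Rle_trans; [|apply Rmax_r].
  rewrite Rabs_Zabs, INR_IZR_INZ. apply IZR_le.
  pose proof (abs_gap_le_signed_sum (1 + p) (1 + q)
    (nth p l 0%Z) (nth q l 0%Z) ltac:(lia) ltac:(lia)).
  lia.
Qed.

Theorem lemma6p2 (n : nat) (beta : R) (l : list Z) :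
  (1 <= n)%nat ->
  2 * (INR n + 2) <= beta ->
  (1 <= abs_norm l <= 2)%Z ->
  ln (1 + bracket l) >=
    / 8 * Rpower (wnorm (2 * beta) l) (/ (2 * beta))
        * Rpower (wnorm (- (2 * beta)) l) (/ (2 * beta)).
Proof.
  intros _ Hbeta Hl.
  assert (Hs : 1 <= 2 * beta) by (pose proof (pos_INR n); lra).
  destruct (wnorm_dual_product_le (2 * beta) l Hs ltac:(lia))
    as [p [q [Hp [Hq Hprod]]]].
  set (L := ln (1 + bracket l)).
  assert (Hbr : 1 <= bracket l) by apply Rmax_l.
  assert (HL : / 2 <= L).
  { pose proof ln_lt_2. enough (ln 2 <= L) by lra. apply ln_le_mono; lra. }
  apply Rle_ge. rewrite Rmult_assoc.
  enough (IZR (Z.abs (nth p l 0%Z)) * IZR (Z.abs (nth q l 0%Z))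
          * ((1 + ln (INR (S p))) / (1 + ln (INR (S q)))) <= 8 * L) by lra.
  pose proof (ln_nat_nonneg (S q) ltac:(lia)).
  destruct (Nat.eq_dec p q) as [<- | Hpq].
  - assert (Ha : (Z.abs (nth p l 0%Z) <= 2)%Z)
      by (pose proof (abs_norm_ge_nth l p); lia).
    apply IZR_le in Ha.
    assert (1 <= IZR (Z.abs (nth p l 0%Z))) by (apply IZR_le; lia).
    unfold Rdiv; rewrite Rinv_r by lra. nra.
  - pose proof (abs_norm_ge_nth_pair l p q Hpq).
    replace (Z.abs (nth p l 0%Z)) with 1%Z by lia.
    replace (Z.abs (nth q l 0%Z)) with 1%Z by lia.
    pose proof (ln_succ_le p q).
    pose proof (bracket_ge_gap l p q ltac:(lia) Hpq Hp Hq).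
    assert (ln (1 + INR (p - q)) <= L)
      by (apply ln_le_mono; [pose proof (pos_INR (p - q)) |]; lra).
    apply (Rmult_le_reg_r (1 + ln (INR (S q)))); [lra|].
    unfold Rdiv; rewrite Rmult_1_l, Rmult_1_l, Rmult_assoc, Rinv_l by lra.
    nra.
Qed.
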